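(* Let $n\ge2$. Every point of the polygon $S(n)$ is an eigenvalue of some standardized Laplacian matrix of order $n$.
   Context: A standardized Laplacian matrix of order $n$ is a real $n\times n$ matrix whose row sums are all $0$ and whose off-diagonal entries are nonpositive with absolute value at most $1/n$. For $k=0,1,\dots,n-1$ put $\lambda_k(n)=\frac1n\big(k-\sum_{j=1}^k e^{-2\pi\mathrm i j/n}\big)=\frac1n\Big(k-\frac{\sin(k\pi/n)}{\sin(\pi/n)}e^{-(k+1)\pi\mathrm i/n}\Big)$ (so $\lambda_0(n)=0$, $\lambda_{n-1}(n)=1$). $S(n)$ is the closed convex polygon with vertices $\lambda_0(n)=0,\lambda_1(n),\dots,\lambda_{n-2}(n),\lambda_{n-1}(n)=1,\overline{\lambda_{n-2}(n)},\dots,\overline{\lambda_1(n)}$. *)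

From Stdlib Require Import Reals.
Open Scope R_scope.

Fixpoint sumR (n : nat) (f : nat -> R) : R :=
  match n with
  | O => 0
  | S m => sumR m f + f m
  end.

(* A real n x n matrix is a function A : nat -> nat -> R, only entries with
   indices < n are relevant. *)

Definition std_laplacian (n : nat) (A : nat -> nat -> R) : Prop :=
  (forall i, (i < n)%nat -> sumR n (fun j => A i j) = 0) /\
  (forall i j, (i < n)%nat -> (j < n)%nat -> i <> j ->
      A i j <= 0 /\ Rabs (A i j) <= / INR n).

(* The complex number z = (a, b) (i.e. a + i b) is an eigenvalue of the real
   n x n matrix A: there is a nonzero complex vector v = x + i y with A v = z v. *)
Definition is_eigenvalue (n : nat) (A : nat -> nat -> R) (z : R * R) : Prop :=
  exists x y : nat -> R,
    (exists i, (i < n)%nat /\ (x i <> 0 \/ y i <> 0)) /\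
    forall i, (i < n)%nat ->
      sumR n (fun j => A i j * x j) = fst z * x i - snd z * y i /\
      sumR n (fun j => A i j * y j) = fst z * y i + snd z * x i.

(* lambda_k(n) = (1/n) (k - sum_{j=1}^k e^{-2 pi i j / n}),
   using e^{-i t} = cos t - i sin t. *)
Definition lambda (n k : nat) : R * R :=
  ( / INR n * (INR k - sumR k (fun j => cos (2 * PI * INR (S j) / INR n))),
    / INR n * sumR k (fun j => sin (2 * PI * INR (S j) / INR n)) ).

Definition conjC (z : R * R) : R * R := (fst z, - snd z).

(* S(n): the closed convex polygon with vertices lambda_0(n), ..., lambda_{n-1}(n)
   and their conjugates, i.e. the convex hull of these finitely many points. *)
Definition in_S (n : nat) (z : R * R) : Prop :=
  exists c d : nat -> R,
    (forall k, (k < n)%nat -> 0 <= c k /\ 0 <= d k) /\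
    sumR n (fun k => c k + d k) = 1 /\
    fst z = sumR n (fun k => c k * fst (lambda n k) + d k * fst (conjC (lambda n k))) /\
    snd z = sumR n (fun k => c k * snd (lambda n k) + d k * snd (conjC (lambda n k))).

From Stdlib Require Import Reals Lra Lia.
Open Scope R_scope.

(* Every point z of S(n) is a convex combination
     z = sum_k (c_k lambda_k + d_k conj(lambda_k))
   of the vertices.  Let P be the cyclic shift e_i |-> e_(i+1 mod n) and, for
   k < n and a step function s, let W_s^k = sum_(j<k) P^(s j) be the 0/1 matrix
   recording where the steps s 0, ..., s (k-1) lead.  The matrix
   L_s^k = (k I - W_s^k) / n has zero row sums and off-diagonal entries in
   [-1/n, 0] as soon as the steps are distinct modulo n, and the Fourier vector
   v_l = exp(-2 pi i l / n) is an eigenvector of it with eigenvalue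
   (k - sum_j exp(-2 pi i (s j) / n)) / n.  The forward steps s j = j + 1 give
   lambda_k, the backward steps s j = n - (j + 1) give its conjugate.
   Both properties "zero row sums with off-diagonal entries in [-t, 0]" and
   "v is an eigenvector with eigenvalue z" are preserved by nonnegative linear
   combinations (with t and z combined linearly), so
     A = sum_k (c_k L_fwd^k + d_k L_bwd^k)
   is a standardized Laplacian matrix having z as an eigenvalue. *)

Lemma sumR_ext (N : nat) (f g : nat -> R) :
  (forall i, (i < N)%nat -> f i = g i) -> sumR N f = sumR N g.
Proof.
  induction N as [|N IH]; intros H; simpl; [reflexivity|].
  rewrite IH by (intros; apply H; lia). rewrite H by lia. reflexivity.
Qed.

Lemma sumR_plus (N : nat) (f g : nat -> R) :
  sumR N (fun i => f i + g i) = sumR N f + sumR N g.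
Proof. induction N as [|N IH]; simpl; [ring|rewrite IH; ring]. Qed.

Lemma sumR_scal (N : nat) (c : R) (f : nat -> R) :
  sumR N (fun i => c * f i) = c * sumR N f.
Proof. induction N as [|N IH]; simpl; [ring|rewrite IH; ring]. Qed.

Lemma sumR_scal_r (N : nat) (c : R) (f : nat -> R) :
  sumR N (fun i => f i * c) = sumR N f * c.
Proof. induction N as [|N IH]; simpl; [ring|rewrite IH; ring]. Qed.

Lemma sumR_opp (N : nat) (f : nat -> R) : sumR N (fun i => - f i) = - sumR N f.
Proof. induction N as [|N IH]; simpl; [ring|rewrite IH; ring]. Qed.

Lemma sumR_const (N : nat) (c : R) : sumR N (fun _ => c) = INR N * c.
Proof. induction N as [|N IH]; [simpl; ring|]. cbn [sumR]. rewrite IH, S_INR; ring. Qed.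

Lemma sumR_swap (N M : nat) (F : nat -> nat -> R) :
  sumR N (fun a => sumR M (fun b => F a b)) = sumR M (fun b => sumR N (fun a => F a b)).
Proof.
  induction N as [|N IH]; simpl.
  - change (0 = sumR M (fun _ => 0)). rewrite sumR_const. ring.
  - rewrite IH, sumR_plus. reflexivity.
Qed.

Definition delta (a b : nat) : R := if Nat.eq_dec a b then 1 else 0.

Lemma delta_eq (a : nat) : delta a a = 1.
Proof. unfold delta. destruct (Nat.eq_dec a a); [reflexivity|contradiction]. Qed.

Lemma delta_neq (a b : nat) : a <> b -> delta a b = 0.
Proof. intros H. unfold delta. destruct (Nat.eq_dec a b); [contradiction|reflexivity]. Qed.

Lemma sumR_delta (N p : nat) (g : nat -> R) :
  (p < N)%nat -> sumR N (fun l => delta p l * g l) = g p.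
Proof.
  induction N as [|N IH]; intros Hp; [lia|]. simpl.
  destruct (Nat.eq_dec p N) as [->|Hne].
  - rewrite delta_eq, (sumR_ext N _ (fun _ => 0)), sumR_const; [ring|].
    intros l Hl. rewrite delta_neq by lia. ring.
  - rewrite IH, delta_neq by lia. ring.
Qed.

Lemma sumR_delta_injective (k l : nat) (g : nat -> nat) :
  (forall a b, (a < k)%nat -> (b < k)%nat -> g a = g b -> a = b) ->
  0 <= sumR k (fun j => delta (g j) l) <= 1.
Proof.
  induction k as [|k IH]; intros Hinj; simpl; [lra|].
  destruct (Nat.eq_dec (g k) l) as [Hk|Hk].
  - rewrite Hk, delta_eq, (sumR_ext k _ (fun _ => 0)), sumR_const; [lra|].
    intros j Hj. apply delta_neq. intros Hj'.
    assert (j = k) by (apply Hinj; [lia|lia|congruence]). lia.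
  - rewrite delta_neq by exact Hk.
    assert (0 <= sumR k (fun j => delta (g j) l) <= 1)
      by (apply IH; intros a b Ha Hb; apply Hinj; lia). lra.
Qed.

Definition madd (A B : nat -> nat -> R) (i l : nat) : R := A i l + B i l.
Definition mscale (c : R) (A : nat -> nat -> R) (i l : nat) : R := c * A i l.
Definition msum (N : nat) (M : nat -> nat -> nat -> R) (i l : nat) : R :=
  sumR N (fun k => M k i l).

Definition bounded_laplacian (n : nat) (t : R) (A : nat -> nat -> R) : Prop :=
  (forall i, (i < n)%nat -> sumR n (fun l => A i l) = 0) /\
  (forall i l, (i < n)%nat -> (l < n)%nat -> i <> l -> - t <= A i l <= 0).

Lemma bounded_laplacian_add (n : nat) (t u : R) (A B : nat -> nat -> R) :
  bounded_laplacian n t A -> bounded_laplacian n u B ->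
  bounded_laplacian n (t + u) (madd A B).
Proof.
  intros [HA HA'] [HB HB']. unfold madd. split.
  - intros i Hi. rewrite sumR_plus, HA, HB by exact Hi. ring.
  - intros i l Hi Hl Hil. specialize (HA' i l Hi Hl Hil). specialize (HB' i l Hi Hl Hil). lra.
Qed.

Lemma bounded_laplacian_scale (n : nat) (c t : R) (A : nat -> nat -> R) :
  0 <= c -> bounded_laplacian n t A -> bounded_laplacian n (c * t) (mscale c A).
Proof.
  intros Hc [HA HA']. unfold mscale. split.
  - intros i Hi. rewrite sumR_scal, HA by exact Hi. ring.
  - intros i l Hi Hl Hil. specialize (HA' i l Hi Hl Hil). nra.
Qed.

Lemma bounded_laplacian_sum (n N : nat) (t : nat -> R) (M : nat -> nat -> nat -> R) :
  (forall k, (k < N)%nat -> bounded_laplacian n (t k) (M k)) ->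
  bounded_laplacian n (sumR N t) (msum N M).
Proof.
  induction N as [|N IH]; intros H.
  - unfold msum. split; simpl; [intros; rewrite sumR_const; ring | intros; lra].
  - change (bounded_laplacian n (sumR N t + t N) (madd (msum N M) (M N))).
    apply bounded_laplacian_add; [apply IH; intros k Hk|]; apply H; lia.
Qed.

Lemma std_laplacian_of_bounded (n : nat) (A : nat -> nat -> R) :
  bounded_laplacian n (/ INR n) A -> std_laplacian n A.
Proof.
  intros [Hrow Hoff]. split; [exact Hrow|].
  intros i l Hi Hl Hil. specialize (Hoff i l Hi Hl Hil).
  rewrite Rabs_left1 by lra. lra.
Qed.

Definition eigvec (n : nat) (A : nat -> nat -> R) (x y : nat -> R) (z : R * R) : Prop :=
  forall i, (i < n)%nat ->
    sumR n (fun j => A i j * x j) = fst z * x i - snd z * y i /\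
    sumR n (fun j => A i j * y j) = fst z * y i + snd z * x i.

Lemma eigvec_add (n : nat) (A B : nat -> nat -> R) (x y : nat -> R) (a b a' b' : R) :
  eigvec n A x y (a, b) -> eigvec n B x y (a', b') ->
  eigvec n (madd A B) x y (a + a', b + b').
Proof.
  intros HA HB i Hi. destruct (HA i Hi) as [HA1 HA2], (HB i Hi) as [HB1 HB2].
  unfold madd. cbn [fst snd] in *.
  rewrite (sumR_ext n _ (fun j => A i j * x j + B i j * x j)) by (intros; ring).
  rewrite (sumR_ext n (fun j => _ * y j) (fun j => A i j * y j + B i j * y j)) by (intros; ring).
  rewrite !sumR_plus, HA1, HA2, HB1, HB2. split; ring.
Qed.

Lemma eigvec_scale (n : nat) (c : R) (A : nat -> nat -> R) (x y : nat -> R) (a b : R) :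
  eigvec n A x y (a, b) -> eigvec n (mscale c A) x y (c * a, c * b).
Proof.
  intros HA i Hi. destruct (HA i Hi) as [HA1 HA2]. unfold mscale. cbn [fst snd] in *.
  rewrite (sumR_ext n _ (fun j => c * (A i j * x j))) by (intros; ring).
  rewrite (sumR_ext n (fun j => _ * y j) (fun j => c * (A i j * y j))) by (intros; ring).
  rewrite !sumR_scal, HA1, HA2. split; ring.
Qed.

Definition csum (N : nat) (z : nat -> R * R) : R * R :=
  (sumR N (fun k => fst (z k)), sumR N (fun k => snd (z k))).

Lemma eigvec_sum (n N : nat) (M : nat -> nat -> nat -> R) (x y : nat -> R)
    (z : nat -> R * R) :
  (forall k, (k < N)%nat -> eigvec n (M k) x y (z k)) ->
  eigvec n (msum N M) x y (csum N z).
Proof.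
  induction N as [|N IH]; intros H.
  - intros i Hi. unfold msum, csum. cbn [sumR fst snd].
    rewrite (sumR_ext n (fun j => 0 * x j) (fun _ => 0)) by (intros; ring).
    rewrite (sumR_ext n (fun j => 0 * y j) (fun _ => 0)) by (intros; ring).
    rewrite sumR_const. split; ring.
  - change (eigvec n (madd (msum N M) (M N)) x y
      (fst (csum N z) + fst (z N), snd (csum N z) + snd (z N))).
    apply eigvec_add.
    + assert (Hsum : eigvec n (msum N M) x y (csum N z))
        by (apply IH; intros k Hk; apply H; lia).
      destruct (csum N z). exact Hsum.
    + assert (HN : eigvec n (M N) x y (z N)) by (apply H; lia).
      destruct (z N). exact HN.
Qed.

Definition shift (n i m : nat) : nat := ((i + m) mod n)%nat.

Lemma shift_cases (n i m : nat) :
  (i < n)%nat -> (m <= n)%nat ->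
  (shift n i m = i + m /\ i + m < n)%nat \/ (shift n i m + n = i + m /\ n <= i + m)%nat.
Proof.
  intros Hi Hm. unfold shift. destruct (Nat.lt_ge_cases (i + m) n) as [Hlt|Hge].
  - left. rewrite Nat.mod_small by exact Hlt. lia.
  - right. replace (i + m)%nat with (i + m - n + 1 * n)%nat at 1 by lia.
    rewrite Nat.Div0.mod_add, Nat.mod_small by lia. lia.
Qed.

Definition walk (n : nat) (s : nat -> nat) (k i l : nat) : R :=
  sumR k (fun j => delta (shift n i (s j)) l).

Definition walk_laplacian (n : nat) (s : nat -> nat) (k i l : nat) : R :=
  / INR n * (INR k * delta i l - walk n s k i l).

Lemma walk_laplacian_apply (n : nat) (s : nat -> nat) (k i : nat) (v : nat -> R) :
  (i < n)%nat ->
  sumR n (fun l => walk_laplacian n s k i l * v l)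
  = / INR n * (INR k * v i - sumR k (fun j => v (shift n i (s j)))).
Proof.
  intros Hi. assert (Hn : n <> 0%nat) by lia.
  unfold walk_laplacian, walk.
  rewrite (sumR_ext n _ (fun l => / INR n * (INR k * (delta i l * v l)
            - sumR k (fun j => delta (shift n i (s j)) l * v l)))).
  2:{ intros l _. rewrite sumR_scal_r. ring. }
  rewrite sumR_scal, (sumR_ext n _ (fun l => INR k * (delta i l * v l)
            + - sumR k (fun j => delta (shift n i (s j)) l * v l))) by (intros; ring).
  rewrite sumR_plus, sumR_opp, sumR_scal, sumR_delta by exact Hi.
  rewrite sumR_swap, (sumR_ext k _ (fun j => v (shift n i (s j)))); [ring|].
  intros j Hj. apply sumR_delta, Nat.mod_upper_bound, Hn.
Qed.

Lemma walk_laplacian_bounded (n k : nat) (s : nat -> nat) :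
  (0 < n)%nat -> (forall j, (j < k)%nat -> (s j < n)%nat) ->
  (forall a b, (a < k)%nat -> (b < k)%nat -> s a = s b -> a = b) ->
  bounded_laplacian n (/ INR n) (walk_laplacian n s k).
Proof.
  intros Hn Hs Hinj. assert (Hinv : 0 < / INR n) by (apply Rinv_0_lt_compat, lt_0_INR, Hn).
  split.
  - intros i Hi. rewrite (sumR_ext n _ (fun l => walk_laplacian n s k i l * 1))
      by (intros; ring).
    rewrite walk_laplacian_apply, sumR_const by exact Hi. ring.
  - intros i l Hi Hl Hil. unfold walk_laplacian.
    rewrite delta_neq by exact Hil.
    assert (0 <= walk n s k i l <= 1); [|nra].
    apply sumR_delta_injective. intros a b Ha Hb Hab.
    pose proof (Hs a Ha). pose proof (Hs b Hb).
    apply Hinj; [exact Ha|exact Hb|].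
    destruct (shift_cases n i (s a)), (shift_cases n i (s b)); lia.
Qed.

Definition theta (n m : nat) : R := 2 * PI * INR m / INR n.
Definition wave_re (n l : nat) : R := cos (theta n l).
Definition wave_im (n l : nat) : R := - sin (theta n l).

(* Angles are only relevant modulo 2 pi, so reduction modulo n is harmless. *)
Lemma theta_shift (n i m : nat) :
  (0 < n)%nat ->
  cos (theta n (shift n i m)) = cos (theta n i + theta n m) /\
  sin (theta n (shift n i m)) = sin (theta n i + theta n m).
Proof.
  intros Hn. assert (HnR : INR n <> 0) by (apply not_0_INR; lia).
  unfold shift. set (q := ((i + m) / n)%nat). set (r := ((i + m) mod n)%nat).
  assert (Hdiv : INR i + INR m = INR n * INR q + INR r).
  { rewrite <- plus_INR, <- mult_INR, <- plus_INR. f_equal. apply Nat.div_mod_eq. }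
  replace (theta n i + theta n m) with (theta n r + 2 * INR q * PI).
  - rewrite cos_period, sin_period. split; reflexivity.
  - unfold theta. field_simplify_eq; [|exact HnR]. nra.
Qed.

Lemma theta_reflect (n m : nat) :
  (0 < n)%nat -> (m <= n)%nat ->
  cos (theta n (n - m)) = cos (theta n m) /\ sin (theta n (n - m)) = - sin (theta n m).
Proof.
  intros Hn Hm. assert (HnR : INR n <> 0) by (apply not_0_INR; lia).
  replace (theta n (n - m)) with (- theta n m + 2 * INR 1 * PI).
  - rewrite cos_period, sin_period, cos_neg, sin_neg. split; reflexivity.
  - unfold theta. rewrite minus_INR by exact Hm. simpl. field. exact HnR.
Qed.

Lemma wave_shift (n i m : nat) :
  (0 < n)%nat ->
  wave_re n (shift n i m) = wave_re n i * cos (theta n m) + wave_im n i * sin (theta n m) /\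
  wave_im n (shift n i m) = wave_im n i * cos (theta n m) - wave_re n i * sin (theta n m).
Proof.
  intros Hn. unfold wave_re, wave_im. destruct (theta_shift n i m Hn) as [-> ->].
  rewrite cos_plus, sin_plus. split; ring.
Qed.

Lemma walk_laplacian_eigvec (n k : nat) (s : nat -> nat) :
  (0 < n)%nat ->
  eigvec n (walk_laplacian n s k) (wave_re n) (wave_im n)
    (/ INR n * (INR k - sumR k (fun j => cos (theta n (s j)))),
     / INR n * sumR k (fun j => sin (theta n (s j)))).
Proof.
  intros Hn i Hi. rewrite !walk_laplacian_apply by exact Hi. cbn [fst snd].
  rewrite (sumR_ext k (fun j => wave_re n _) (fun j =>
     wave_re n i * cos (theta n (s j)) + wave_im n i * sin (theta n (s j))))
    by (intros; apply wave_shift, Hn).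
  rewrite (sumR_ext k (fun j => wave_im n _) (fun j =>
     wave_im n i * cos (theta n (s j)) + - (wave_re n i * sin (theta n (s j)))))
    by (intros j _; rewrite (proj2 (wave_shift n i (s j) Hn)); ring).
  rewrite !sumR_plus, sumR_opp, !sumR_scal. split; ring.
Qed.

Lemma forward_eigvec (n k : nat) :
  (0 < n)%nat -> eigvec n (walk_laplacian n S k) (wave_re n) (wave_im n) (lambda n k).
Proof. intros Hn. exact (walk_laplacian_eigvec n k S Hn). Qed.

Lemma backward_eigvec (n k : nat) :
  (0 < n)%nat -> (k < n)%nat ->
  eigvec n (walk_laplacian n (fun j => n - S j)%nat k) (wave_re n) (wave_im n)
    (conjC (lambda n k)).
Proof.
  intros Hn Hk. unfold conjC, lambda. cbn [fst snd].
  rewrite Ropp_mult_distr_r, <- sumR_opp.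
  rewrite (sumR_ext k (fun j => cos _) (fun j => cos (theta n (n - S j))))
    by (intros; apply eq_sym, theta_reflect; lia).
  rewrite (sumR_ext k (fun j => - sin _) (fun j => sin (theta n (n - S j))))
    by (intros; apply eq_sym, theta_reflect; lia).
  apply walk_laplacian_eigvec, Hn.
Qed.

Theorem theorem9 (n : nat) (hn : (2 <= n)%nat) (z : R * R) :
  in_S n z -> exists A : nat -> nat -> R, std_laplacian n A /\ is_eigenvalue n A z.
Proof.
  intros [c [d [Hcd [Hsum [Hre Him]]]]].
  assert (Hn : (0 < n)%nat) by lia.
  exists (msum n (fun k => madd (mscale (c k) (walk_laplacian n S k))
                      (mscale (d k) (walk_laplacian n (fun j => n - S j)%nat k)))).
  split.
  - apply std_laplacian_of_bounded.
    assert (Hweights : sumR n (fun k => c k * / INR n + d k * / INR n) = / INR n)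
      by (rewrite sumR_plus, !sumR_scal_r, <- Rmult_plus_distr_r, <- sumR_plus, Hsum; ring).
    rewrite <- Hweights.
    apply bounded_laplacian_sum. intros k Hk. destruct (Hcd k Hk) as [Hc Hd].
    apply bounded_laplacian_add; apply bounded_laplacian_scale; try assumption;
      apply walk_laplacian_bounded; cbv beta; intros; lia.
  - exists (wave_re n), (wave_im n). split.
    + exists 0%nat. split; [lia|]. left. unfold wave_re, theta.
      rewrite Rmult_0_r, Rdiv_0_l, cos_0. lra.
    + replace z with (csum n (fun k =>
         (c k * fst (lambda n k) + d k * fst (conjC (lambda n k)),
          c k * snd (lambda n k) + d k * snd (conjC (lambda n k)))))
        by (destruct z; unfold csum; cbn [fst snd] in *; congruence).
      apply eigvec_sum. intros k Hk.
      apply eigvec_add; apply eigvec_scale;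
        [apply forward_eigvec, Hn | apply backward_eigvec; assumption].
Qed.
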